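(* Let $Q$ be a finite connected quandle. Then $Q$ is isomorphic to $\mathrm{GAlex}(G,f)$ for some group $G$ and $f\in\mathrm{Aut}(G)$ if and only if one of the following holds: (i) $|Q|=|\mathrm{Inn}(Q)'|$; (ii) $\mathrm{Stab}_{\mathrm{Inn}(Q)'}(e)=\{1\}$ for every $e\in Q$. If either (i) or (ii) holds then both hold. Furthermore, in this case one may take $G=\mathrm{Inn}(Q)'$ and, for any $e\in Q$, $f(g)=R_e^{-1}gR_e$ for $g\in G$.
   Context: A quandle is a set with operation $*$ satisfying $a*a=a$; unique right division; $(a*b)*c=(a*c)*(b*c)$. $R_a(y)=y*a$; $\mathrm{Inn}(Q)$ is the group generated by the $R_a$, and $Q$ is connected if it acts transitively. $\mathrm{Inn}(Q)'$ is its derived (commutator) subgroup, which is normal in $\mathrm{Inn}(Q)$, so $g\mapsto R_e^{-1}gR_e$ is an automorphism of it; $\mathrm{Stab}$ denotes the stabilizer under the natural action on $Q$. $\mathrm{GAlex}(G,f)$ is the quandle on a group $G$ with $a*b=f(ab^{-1})b$. *)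

From HB Require Import structures.
From mathcomp Require Import all_boot all_fingroup.
Set Implicit Arguments. Unset Strict Implicit. Unset Printing Implicit Defensive.

Record quandle (Q : finType) := Quandle {
  qop : Q -> Q -> Q;
  qidem : forall a, qop a a = a;
  qdiv : forall a b, exists! x, qop x a = b;
  qdist : forall a b c, qop (qop a b) c = qop (qop a c) (qop b c)
}.

Section QuandleDefs.
Variables (Q : finType) (q : quandle Q).

Lemma qop_inj (a : Q) : injective (fun y => qop q y a).
Proof.
move=> x y Hxy; have [z [_ Hz]] := qdiv q a (qop q x a).
by rewrite -(Hz x erefl) -(Hz y (esym Hxy)).
Qed.

Definition Rop (a : Q) : {perm Q} := perm (@qop_inj a).

Definition Inn : {group {perm Q}} := <<[set Rop a | a : Q]>>%G.

Definition Inn' : {group {perm Q}} := [~: Inn, Inn]%G.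

Definition connected_quandle : bool := [transitive Inn, on [set: Q] | 'P].

Definition GAlex_iso (gT : finGroupType) (G : {set gT}) (f : gT -> gT) : Prop :=
  exists phi : Q -> gT,
    [/\ forall a, phi a \in G,
        injective phi,
        {in G, forall y, exists a, phi a = y} &
        forall a b, phi (qop q a b) = (f (phi a * (phi b)^-1) * phi b)%g].

Definition is_GAlex : Prop :=
  exists (gT : finGroupType) (G : {group gT}) (f : {perm gT}),
    f \in Aut G /\ GAlex_iso G f.

End QuandleDefs.

From mathcomp Require Import all_boot all_fingroup.
Set Implicit Arguments. Unset Strict Implicit. Unset Printing Implicit Defensive.
Local Open Scope group_scope.

(* If phi : Q -> GAlex(G, f) is an injective quandle morphism, then, seen
   through phi, every R_b is the affine map g |-> f g * h_b of G. Affine maps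
   with linear part in the abelian group <f> compose and invert as such, so
   commutators of Inn(Q) are right translations of G; a translation fixing a
   point of the image of phi is trivial, so Inn(Q)' acts freely.
   Conversely, in a connected quandle Inn(Q) = <R_e> Inn(Q)' and R_e fixes e,
   so Inn(Q)' is transitive; if it acts freely, d |-> d e identifies Inn(Q)'
   with Q, and this identification carries * to the operation of
   GAlex(Inn(Q)', f) with f = conjugation by R_e, because every element of
   Inn(Q) is a quandle automorphism. Orbit-stabilizer links freeness with
   |Q| = |Inn(Q)'|. *)

Lemma gen_subset_mul_closed (gT : finGroupType) (A : {set gT}) (P : {pred gT}) :
  1 \in P -> (forall x y, x \in P -> y \in P -> x * y \in P) ->
  {subset A <= P} -> {subset <<A>> <= P}.
Proof.
move=> P1 PM sAP.
have gP : group_set [set x in P].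
  by apply/group_setP; split=> [|x y]; rewrite !inE //; apply: PM.
have /subsetP sAG : <<A>> \subset Group gP.
  by rewrite gen_subG; apply/subsetP => x /sAP; rewrite inE.
by move=> x /sAG; rewrite inE.
Qed.

Lemma Aut_morphM (gT : finGroupType) (G : {group gT}) (u : {perm gT}) :
  u \in Aut G -> {in G &, {morph u : x y / x * y}}.
Proof. by move=> Au x y Gx Gy; rewrite -(autmE Au) morphM. Qed.

Section GAlexFree.
Variables (Q : finType) (q : quandle Q) (gT : finGroupType) (G : {group gT}).
Variables (f : {perm gT}) (phi : Q -> gT).
Hypotheses (fA : f \in Aut G) (phiG : forall a, phi a \in G).
Hypotheses (phi_inj : injective phi)
  (phiM : forall a b, phi (qop q a b) = f (phi a * (phi b)^-1) * phi b).

Definition affine_perm (s : {perm Q}) (u : {perm gT}) : bool :=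
  [exists h in G, [forall x, phi (s x) == u (phi x) * h]].

Lemma affine_permP (s : {perm Q}) (u : {perm gT}) :
  reflect (exists2 h, h \in G & forall x, phi (s x) = u (phi x) * h)
          (affine_perm s u).
Proof.
apply: (iffP exists_inP) => [[h Gh /forallP Hs]|[h Gh Hs]].
  by exists h => // x; apply/eqP.
by exists h => //; apply/forallP => x; rewrite Hs.
Qed.

Lemma affine_perm1 : affine_perm 1 1.
Proof. by apply/affine_permP; exists 1 => // x; rewrite !perm1 mulg1. Qed.

Lemma affine_permM (s t : {perm Q}) (u v : {perm gT}) :
  u \in Aut G -> v \in Aut G -> affine_perm s u -> affine_perm t v ->
  affine_perm (s * t) (u * v).
Proof.
move=> Au Av /affine_permP[h Gh Hs] /affine_permP[k Gk Ht]; apply/affine_permP.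
exists (v h * k); first by rewrite groupM ?Aut_closed.
by move=> x; rewrite !permM Ht Hs (Aut_morphM Av) ?mulgA ?Aut_closed.
Qed.

Lemma affine_permV (s : {perm Q}) (u : {perm gT}) : u \in Aut G ->
  affine_perm s u -> affine_perm s^-1 u^-1.
Proof.
move=> Au /affine_permP[h Gh Hs]; apply/affine_permP.
have AuV : u^-1 \in Aut G by rewrite groupV.
exists (u^-1 h^-1); first by rewrite Aut_closed ?groupV.
move=> y; rewrite -{2}(permKV s y) Hs.
rewrite -(Aut_morphM AuV) ?groupM ?groupV ?Aut_closed //.
by rewrite mulgK permK.
Qed.

Lemma affine_Rop b : affine_perm (Rop q b) f.
Proof.
apply/affine_permP; exists (f (phi b)^-1 * phi b).
  by rewrite groupM ?Aut_closed ?groupV.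
by move=> x; rewrite permE phiM (Aut_morphM fA) ?groupV // mulgA.
Qed.

Lemma Inn_affine (s : {perm Q}) :
  s \in Inn q -> exists2 u, u \in <[f]> & affine_perm s u.
Proof.
have sfA : <[f]> \subset Aut G by rewrite cycle_subG.
pose P := [pred s | [exists u in <[f]>, affine_perm s u]].
move=> Is; suff /exists_inP[u fu Hs] : s \in P by exists u.
move: s Is; apply: (gen_subset_mul_closed (A := [set Rop q a | a : Q])).
- by apply/exists_inP; exists 1; rewrite ?group1 ?affine_perm1.
- move=> s t /exists_inP[u fu Hs] /exists_inP[v fv Ht]; apply/exists_inP.
  by exists (u * v); rewrite ?groupM ?affine_permM ?(subsetP sfA).
- move=> _ /imsetP[b _ ->].
  by apply/exists_inP; exists f; rewrite ?cycle_id ?affine_Rop.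
Qed.

(* The linear part of a commutator is a commutator in the abelian group <f>. *)
Lemma Inn'_affine1 (s : {perm Q}) : s \in Inn' q -> affine_perm s 1.
Proof.
have sfA : <[f]> \subset Aut G by rewrite cycle_subG.
move: s; apply: gen_subset_mul_closed => [|s t|_ /imset2P[x y Ix Iy ->]].
- exact: affine_perm1.
- by rewrite -{3}(mulg1 1); apply: affine_permM; rewrite group1.
have [u fu Hx] := Inn_affine Ix; have [v fv Hy] := Inn_affine Iy.
have [Au Av] := (subsetP sfA u fu, subsetP sfA v fv).
have /commgP/eqP <- : commute u v by apply: (centsP (cycle_abelian f)).
have [HxV HyV] := (affine_permV Au Hx, affine_permV Av Hy).
rewrite !commgEl !conjgE !mulgA.
apply: (affine_permM _ Av (affine_permM _ Au (affine_permM _ _ HxV HyV) Hx) Hy).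
all: by rewrite ?groupM ?groupV.
Qed.

Lemma GAlex_stab_trivial e : 'C_(Inn' q)[e | 'P] = 1.
Proof.
apply/trivgP/subsetP => s /setIP[Ds /astab1P]; rewrite /= apermE => se.
have /affine_permP[h _ Hs] := Inn'_affine1 Ds.
have h1 : h = 1.
  by apply: (mulgI (phi e)); rewrite mulg1 -{1}(perm1 (phi e)) -Hs se.
rewrite inE; apply/eqP/permP => x; apply: phi_inj.
by rewrite Hs h1 !perm1 mulg1.
Qed.

End GAlexFree.

Section Connected.
Variables (Q : finType) (q : quandle Q).

Lemma RopE a y : Rop q a y = qop q y a.
Proof. by rewrite permE. Qed.

Lemma Inn_qmorph (h : {perm Q}) :
  h \in Inn q -> forall x y, h (qop q x y) = qop q (h x) (h y).
Proof.
pose P := [pred h : {perm Q} | [forall x, forall y,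
                               h (qop q x y) == qop q (h x) (h y)]].
have PP (s : {perm Q}) :
    reflect (forall x y, s (qop q x y) = qop q (s x) (s y)) (s \in P).
  apply: (iffP forallP) => [Hs x y | Hs x]; first exact/eqP/(forallP (Hs x)).
  by apply/forallP => y; apply/eqP.
move=> Ih; apply/PP; move: h Ih.
apply: (gen_subset_mul_closed (A := [set Rop q a | a : Q])).
- by apply/PP => x y; rewrite !perm1.
- by move=> s t /PP Hs /PP Ht; apply/PP => x y; rewrite !permM Hs Ht.
- by move=> _ /imsetP[b _ ->]; apply/PP => x y; rewrite !RopE qdist.
Qed.

Lemma Rop_conj (e : Q) (h : {perm Q}) :
  h \in Inn q -> Rop q (h e) = Rop q e ^ h.
Proof.
move=> Ih; apply/permP => y; rewrite conjgE !permM !RopE.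
by rewrite Inn_qmorph // permKV.
Qed.

Lemma Rop_in_Inn e : Rop q e \in Inn q.
Proof. by rewrite mem_gen ?imset_f. Qed.

Lemma Inn_norm_der1 : Inn q \subset 'N(Inn' q).
Proof. exact: normsR (normG _) (normG _). Qed.

Lemma Rop_norm_der1 e : Rop q e \in 'N(Inn' q).
Proof. by rewrite (subsetP Inn_norm_der1) ?Rop_in_Inn. Qed.

Lemma conj_aut_RopE e :
  {in Inn' q, forall g, conj_aut (Inn' q) (Rop q e) g = g ^ Rop q e}.
Proof. by move=> g Dg; rewrite norm_conj_autE ?Rop_norm_der1. Qed.

Hypothesis conn : connected_quandle q.

Lemma Inn_sub_cycle_der1 e : Inn q \subset <[Rop q e]> * Inn' q.
Proof.
have nRD : <[Rop q e]> \subset 'N(Inn' q) by rewrite cycle_subG Rop_norm_der1.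
rewrite -norm_joinEl // gen_subG; apply/subsetP => _ /imsetP[c _ ->].
have [h Ih ->] := atransP2 conn (in_setT e) (in_setT c).
rewrite /= Rop_conj // -(mulKVg (Rop q e) (Rop q e ^ h)) -commgEl.
rewrite groupM //; first by rewrite (subsetP (joing_subl _ _)) ?cycle_id.
by rewrite (subsetP (joing_subr _ _)) // mem_commg ?Rop_in_Inn.
Qed.

Lemma der1_orbit e : orbit 'P (Inn' q) e = [set: Q].
Proof.
apply/setP => x; rewrite inE.
have [h /(subsetP (Inn_sub_cycle_der1 e)) /mulsgP[r d Rr Dd ->] ->] :=
  atransP2 conn (in_setT e) (in_setT x).
have : r \in 'C[e | 'P].
  move: r Rr; apply/subsetP; rewrite cycle_subG.
  by apply/astab1P; rewrite /= apermE RopE qidem.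
move/astab1P; rewrite /= apermE => re.
by rewrite apermE permM re -apermE; apply: mem_orbit.
Qed.

Lemma card_der1_regular :
  #|Q| = #|Inn' q| <-> forall e : Q, 'C_(Inn' q)[e | 'P] = 1.
Proof.
have card_stab e : (#|Q| * #|'C_(Inn' q)[e | 'P]|)%N = #|Inn' q|.
  by rewrite -(card_orbit_stab 'P (Inn' q) e) der1_orbit cardsT.
have [e0 _ _] := imsetP conn.
split=> [EQ e | reg]; last by rewrite -(card_stab e0) reg cards1 muln1.
have Q_gt0 : (0 < #|Q|)%N by apply/card_gt0P; exists e0.
by apply/eqP; rewrite trivg_card1 -(eqn_pmul2l Q_gt0) muln1 card_stab EQ.
Qed.

Section Regular.
Hypothesis reg : forall e : Q, 'C_(Inn' q)[e | 'P] = 1.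
Variable e : Q.

Lemma der1_orbit_inj (d1 d2 : {perm Q}) :
  d1 \in Inn' q -> d2 \in Inn' q -> d1 e = d2 e -> d1 = d2.
Proof.
move=> D1 D2 E; apply/eqP; rewrite eq_mulgV1.
have : d1 * d2^-1 \in 'C_(Inn' q)[e | 'P].
  rewrite inE groupM ?groupV //=.
  by apply/astab1P; rewrite /= apermE permM E permK.
by rewrite reg inE.
Qed.

Definition der1_coord (a : Q) : {perm Q} :=
  odflt 1 [pick d in Inn' q | d e == a].

Lemma der1_coordP a : der1_coord a \in Inn' q /\ der1_coord a e = a.
Proof.
rewrite /der1_coord; case: pickP => [d /andP[Dd /eqP]|none] //=.
have /orbitP[d Dd] : a \in orbit 'P (Inn' q) e by rewrite der1_orbit.
by rewrite /= apermE => de; have := none d; rewrite Dd de eqxx.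
Qed.

Lemma regular_GAlex :
  GAlex_iso q (Inn' q) (conj_aut (Inn' q) (Rop q e)).
Proof.
have eRV : (Rop q e)^-1 e = e by rewrite -{2}(qidem q e) -RopE permK.
exists der1_coord; split.
- by move=> a; case: (der1_coordP a).
- move=> a b E; case: (der1_coordP a) => _ <-.
  by case: (der1_coordP b) => _ <-; rewrite E.
- move=> y Dy; exists (y e); case: (der1_coordP (y e)) => Dp.
  exact: der1_orbit_inj.
move=> a b; case: (der1_coordP a) => Da Ea; case: (der1_coordP b) => Db Eb.
case: (der1_coordP (qop q a b)) => Dab Eab.
apply: der1_orbit_inj => //.
  by rewrite groupM // conj_aut_RopE ?memJ_norm ?groupM ?groupV ?Rop_norm_der1.
rewrite Eab conj_aut_RopE ?groupM ?groupV // !permM eRV Ea RopE.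
by rewrite Inn_qmorph ?permKV ?Eb // (subsetP (der1_subG _)).
Qed.

End Regular.
End Connected.

Theorem mainTheorem11 (Q : finType) (q : quandle Q) :
  connected_quandle q ->
  [/\ is_GAlex q <->
        (#|Q| = #|Inn' q| \/ forall e : Q, ('C_(Inn' q)[e | 'P] = 1)%g),
      #|Q| = #|Inn' q| <-> (forall e : Q, ('C_(Inn' q)[e | 'P] = 1)%g) &
      #|Q| = #|Inn' q| ->
        forall e : Q, exists f : {perm {perm Q}},
          [/\ f \in Aut (Inn' q),
              {in Inn' q, forall g, f g = (g ^ Rop q e)%g} &
              GAlex_iso q (Inn' q) f]].
Proof.
move=> conn; have card_reg := card_der1_regular conn.
split=> [|//|/card_reg reg e].
- split=> [[gT [G [f [fA [phi [phiG phi_inj _ phiM]]]]]] | H].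
    by right; apply: GAlex_stab_trivial fA phiG phi_inj phiM.
  have reg : forall e, 'C_(Inn' q)[e | 'P] = 1 by case: H => // /card_reg.
  have [e0 _ _] := imsetP conn.
  exists _, (Inn' q), (conj_aut (Inn' q) (Rop q e0)).
  by split; [exact: Aut_aut | exact: regular_GAlex].
- exists (conj_aut (Inn' q) (Rop q e)).
  by split; [exact: Aut_aut | exact: conj_aut_RopE | exact: regular_GAlex].
Qed.
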